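(* Let $V$ be a standard $U_q(\widehat{\mathfrak{sl}}_2)$-module of diameter $1$ and let $W$ be any $U_q(\widehat{\mathfrak{sl}}_2)$-module. Then for every integer $n\ge1$, on $V\otimes W$: (i) $R^n$ acts as $1\otimes R^n+[n]_qR_n$, where $R_n=uq^{n-1}e_0^+\otimes R^{n-1}K_0+vq^{1-n}e_1^-K_1\otimes R^{n-1}K_1$; (ii) $L^n$ acts as $1\otimes L^n+[n]_qL_n$, where $L_n=u^*q^{1-n}e_1^+\otimes K_1L^{n-1}+v^*q^{n-1}e_0^-K_0\otimes K_0L^{n-1}$. (Here an element $X\otimes Y$ acts on $V\otimes W$ by $v\otimes w\mapsto Xv\otimes Yw$.)
   Context: Let $\mathbb F$ be an algebraically closed field and fix nonzero $q\in\mathbb F$ with $q^2\ne1$; write $[n]_q=(q^n-q^{-n})/(q-q^{-1})$. $U_q(\widehat{\mathfrak{sl}}_2)$ is the associative unital $\mathbb F$-algebra with generators $e_i^{\pm},K_i^{\pm1}$ ($i\in\{0,1\}$) and relations $K_iK_i^{-1}=K_i^{-1}K_i=1$, $K_0K_1=K_1K_0$, $K_ie_i^{\pm}K_i^{-1}=q^{\pm2}e_i^{\pm}$, $K_ie_j^{\pm}K_i^{-1}=q^{\mp2}e_j^{\pm}$ ($i\ne j$), $e_i^+e_i^--e_i^-e_i^+=(K_i-K_i^{-1})/(q-q^{-1})$, $e_0^{\pm}e_1^{\mp}=e_1^{\mp}e_0^{\pm}$, and $(e_i^\pm)^3e_j^\pm-[3]_q(e_i^\pm)^2e_j^\pm e_i^\pm+[3]_qe_i^\pm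 e_j^\pm(e_i^\pm)^2-e_j^\pm(e_i^\pm)^3=0$ ($i\ne j$). It is a Hopf algebra with comultiplication $\Delta(e_i^+)=e_i^+\otimes K_i+1\otimes e_i^+$, $\Delta(e_i^-)=e_i^-\otimes1+K_i^{-1}\otimes e_i^-$, $\Delta(K_i)=K_i\otimes K_i$, and the tensor product $V\otimes W$ of modules is a module via $z(v\otimes w)=\Delta(z)(v\otimes w)$. A standard module of diameter $1$ is a module $V(\alpha)$ ($\alpha\in\mathbb F$ nonzero) with basis $x,y$ and $K_1x=qx$, $K_1y=q^{-1}y$, $e_1^-x=y$, $e_1^-y=0$, $e_1^+x=0$, $e_1^+y=x$, $K_0x=q^{-1}x$, $K_0y=qy$, $e_0^-x=0$, $e_0^-y=q\alpha^{-1}x$, $e_0^+x=q^{-1}\alpha y$, $e_0^+y=0$. Fix nonzero $b,c,b^*,c^*\in\mathbb F$ and $u,v,u^*,v^*\in\mathbb F$ with $uv^*=-bb^*q^{-1}(q-q^{-1})^2$ and $vu^*=-cc^*q^{-1}(q-q^{-1})^2$; set $R=ue_0^++ve_1^-K_1$ and $L=u^*e_1^++v^*e_0^-K_0$ (and $R^0=L^0=1$). *)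

From HB Require Import structures.
From mathcomp Require Import all_boot all_order all_algebra.
Set Implicit Arguments. Unset Strict Implicit. Unset Printing Implicit Defensive.
Import Order.TTheory GRing.Theory Num.Theory.
Local Open Scope ring_scope.

Section Uq.
Variable F : fieldType.
Variable q : F.

Definition qint (n : nat) : F := (q ^+ n - q ^- n) / (q - q^-1).

Section Mod.
Variable W : lmodType F.

Definition is_lin (f : W -> W) := forall (a : F) (x y : W), f (a *: x + y) = a *: f x + f y.

Definition serre (a b : W -> W) :=
  forall w, a (a (a (b w))) - qint 3 *: a (a (b (a w)))
            + qint 3 *: a (b (a (a w))) - b (a (a (a w))) = 0.

Record uq_mod := UqMod {
  e0p : W -> W; e0m : W -> W; e1p : W -> W; e1m : W -> W;
  K0 : W -> W; K1 : W -> W; K0i : W -> W; K1i : W -> W;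
  e0p_lin : is_lin e0p; e0m_lin : is_lin e0m; e1p_lin : is_lin e1p; e1m_lin : is_lin e1m;
  K0_lin : is_lin K0; K1_lin : is_lin K1; K0i_lin : is_lin K0i; K1i_lin : is_lin K1i;
  K0K0i : forall w, K0 (K0i w) = w; K0iK0 : forall w, K0i (K0 w) = w;
  K1K1i : forall w, K1 (K1i w) = w; K1iK1 : forall w, K1i (K1 w) = w;
  K0K1 : forall w, K0 (K1 w) = K1 (K0 w);
  K0e0p : forall w, K0 (e0p (K0i w)) = q ^+ 2 *: e0p w;
  K0e0m : forall w, K0 (e0m (K0i w)) = q ^- 2 *: e0m w;
  K1e1p : forall w, K1 (e1p (K1i w)) = q ^+ 2 *: e1p w;
  K1e1m : forall w, K1 (e1m (K1i w)) = q ^- 2 *: e1m w;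
  K0e1p : forall w, K0 (e1p (K0i w)) = q ^- 2 *: e1p w;
  K0e1m : forall w, K0 (e1m (K0i w)) = q ^+ 2 *: e1m w;
  K1e0p : forall w, K1 (e0p (K1i w)) = q ^- 2 *: e0p w;
  K1e0m : forall w, K1 (e0m (K1i w)) = q ^+ 2 *: e0m w;
  comm0 : forall w, e0p (e0m w) - e0m (e0p w) = (q - q^-1)^-1 *: (K0 w - K0i w);
  comm1 : forall w, e1p (e1m w) - e1m (e1p w) = (q - q^-1)^-1 *: (K1 w - K1i w);
  e0pe1m : forall w, e0p (e1m w) = e1m (e0p w);
  e0me1p : forall w, e0m (e1p w) = e1p (e0m w);
  serre0p : serre e0p e1p; serre1p : serre e1p e0p;
  serre0m : serre e0m e1m; serre1m : serre e1m e0m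
}.

Variable M : uq_mod.

Definition RW (u v : F) (w : W) : W := u *: e0p M w + v *: e1m M (K1 M w).
Definition LW (us vs : F) (w : W) : W := us *: e1p M w + vs *: e0m M (K0 M w).

(* V(alpha) (x,y basis) tensor W is modelled as W * W:  (a, b) <-> x (x) a + y (x) b *)
Definition padd (p r : W * W) : W * W := (p.1 + r.1, p.2 + r.2).
Definition pscale (k : F) (p : W * W) : W * W := (k *: p.1, k *: p.2).

(* X (x) Y, where X : 'M_2 is an operator on V in the basis (x,y);
   X i j = coefficient of basis vector i in X(basis vector j). *)
Definition tens (X : 'M[F]_2) (Y : W -> W) (p : W * W) : W * W :=
  (X ord0 ord0 *: Y p.1 + X ord0 ord_max *: Y p.2,
   X ord_max ord0 *: Y p.1 + X ord_max ord_max *: Y p.2).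
End Mod.

Definition mx2 (a b c d : F) : 'M[F]_2 :=
  \matrix_(i < 2, j < 2)
    (if (i == 0 :> nat) then (if (j == 0 :> nat) then a else b)
     else (if (j == 0 :> nat) then c else d)).

(* Generators acting on the standard module V(alpha) of diameter 1 *)
Section Std.
Variable alpha : F.
Definition K1V := mx2 q 0 0 q^-1.
Definition K1iV := mx2 q^-1 0 0 q.
Definition K0V := mx2 q^-1 0 0 q.
Definition K0iV := mx2 q 0 0 q^-1.
Definition e1mV := mx2 0 0 1 0.
Definition e1pV := mx2 0 1 0 0.
Definition e0mV := mx2 0 (q / alpha) 0 0.
Definition e0pV := mx2 0 0 (alpha / q) 0.

Variables (W : lmodType F) (M : uq_mod W).

(* Action of Delta(z) on V(alpha) (x) W for the generators used *)
Definition De0p p := padd (tens e0pV (K0 M) p) (tens 1%:M (e0p M) p).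
Definition De1p p := padd (tens e1pV (K1 M) p) (tens 1%:M (e1p M) p).
Definition De0m p := padd (tens e0mV id p) (tens K0iV (e0m M) p).
Definition De1m p := padd (tens e1mV id p) (tens K1iV (e1m M) p).
Definition DK0 p := tens K0V (K0 M) p.
Definition DK1 p := tens K1V (K1 M) p.

Definition RVW (u v : F) (p : W * W) : W * W :=
  padd (pscale u (De0p p)) (pscale v (De1m (DK1 p))).
Definition LVW (us vs : F) (p : W * W) : W * W :=
  padd (pscale us (De1p p)) (pscale vs (De0m (DK0 p))).
End Std.
End Uq.

From HB Require Import structures.
From mathcomp Require Import all_boot all_order all_algebra.
From mathcomp Require Import ring.
Set Implicit Arguments. Unset Strict Implicit. Unset Printing Implicit Defensive.
Import GRing.Theory.
Local Open Scope ring_scope.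

(* Writing a vector of V(alpha) (x) W as x (x) a + y (x) b, i.e. as a pair
   (a, b), the action of R is "lower triangular":
     R (a, b) = (R a, R b + u alpha q^-1 K0 a + v q K1 a),
   and that of L is "upper triangular":
     L (a, b) = (L a + u* K1 b + v* q^2 alpha^-1 K0 b, L b).
   The off-diagonal operators K0, K1 q-commute with R and L on W
   (K0 R = q^2 R K0, K1 R = q^-2 R K1, L K1 = q^-2 K1 L, L K0 = q^2 K0 L).  Then
   the geometric sums of q^2 and q^-2 are identified with q^(n-1) [n]_q and
   q^(1-n) [n]_q. *)

Definition geom (F : fieldType) (s : F) (n : nat) : F := \sum_(j < n) s ^+ j.

Lemma geomSr (F : fieldType) (s : F) n : geom s n.+1 = geom s n + s ^+ n.
Proof. by rewrite /geom big_ord_recr. Qed.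

Lemma geomSl (F : fieldType) (s : F) n : geom s n.+1 = s * geom s n + 1.
Proof.
rewrite /geom big_ord_recl addrC mulr_sumr.
by congr (_ + _); apply: eq_bigr => j _; rewrite exprS.
Qed.

Section QIntegers.
Variables (F : fieldType) (q : F).
Hypotheses (hq0 : q != 0) (hq2 : q ^+ 2 != 1).

Lemma qdiff_neq0 : q - q^-1 != 0.
Proof.
apply: contra hq2 => /eqP hd; apply/eqP.
have -> : q ^+ 2 = q * (q - q^-1) + 1 by rewrite mulrBr mulfV // expr2 subrK.
by rewrite hd mulr0 add0r.
Qed.

Lemma qint_inv n : qint q^-1 n = qint q n.
Proof.
rewrite /qint invrK exprVn invrK -opprB -[X in _ / X]opprB invrN mulrNN //.
Qed.

Lemma geom_q2 n : geom (q ^+ 2) n.+1 = q ^+ n * qint q n.+1.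
Proof.
have hd := qdiff_neq0.
elim: n => [|n IH]; first by rewrite /geom big_ord1 /qint !expr0 expr1 mul1r divff.
rewrite geomSr IH /qint -exprM mulnC exprM !exprS.
by field; rewrite hq0 expf_neq0 // -expr2 subr_eq0 hq2.
Qed.
End QIntegers.

(* 1 + q^-2 + ... + q^(-2n) = q^-n [n+1]_q, by the symmetry q |-> q^-1. *)
Lemma geom_qm2 (F : fieldType) (q : F) (hq0 : q != 0) (hq2 : q ^+ 2 != 1) n :
  geom (q ^- 2) n.+1 = q ^- n * qint q n.+1.
Proof.
have hqi0 : q^-1 != 0 by rewrite invr_eq0.
have hqi2 : q^-1 ^+ 2 != 1 by rewrite exprVn invr_eq1.
by rewrite -exprVn geom_q2 // exprVn qint_inv.
Qed.

Section LinearMaps.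
Variables (F : fieldType) (W : lmodType F).

Section OneMap.
Variables (f : W -> W) (hf : is_lin f).

Lemma lin0 : f 0 = 0.
Proof.
have h := hf 1 0 0; rewrite !scale1r addr0 in h.
by apply: (addrI (f 0)); rewrite addr0 -h.
Qed.

Lemma linZ k x : f (k *: x) = k *: f x.
Proof. by rewrite -[k *: x]addr0 hf lin0 addr0. Qed.

Lemma linD x y : f (x + y) = f x + f y.
Proof. by rewrite -[x]scale1r hf !scale1r. Qed.
End OneMap.

Lemma conj_twist (K Ki X : W -> W) (s : F) : (forall w, Ki (K w) = w) ->
  (forall w, K (X (Ki w)) = s *: X w) -> forall w, K (X w) = s *: X (K w).
Proof. by move=> hKiK hKX w; rewrite -{1}(hKiK w) hKX. Qed.

Lemma twist_iter_l (f T : W -> W) (s : F) : is_lin f ->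
  (forall w, T (f w) = s *: f (T w)) ->
  forall n w, T (iter n f w) = s ^+ n *: iter n f (T w).
Proof.
move=> hf hT; elim=> [|n IH] w /=; first by rewrite scale1r.
by rewrite hT IH (linZ hf) scalerA exprS.
Qed.

Lemma twist_flip (f T : W -> W) (s : F) : s != 0 ->
  (forall w, T (f w) = s *: f (T w)) -> forall w, f (T w) = s^-1 *: T (f w).
Proof. by move=> hs hT w; rewrite hT scalerA mulVf ?scale1r. Qed.

(* Each step adds
   one more term of the geometric sums of s0 and s1. *)
Section Triangular.
Variables (f T0 T1 : W -> W) (s0 s1 c0 c1 : F).
Hypothesis hf : is_lin f.

Definition lower_step (p : W * W) : W * W :=
  (f p.1, f p.2 + (c0 *: T0 p.1 + c1 *: T1 p.1)).

Definition upper_step (p : W * W) : W * W :=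
  (f p.1 + (c0 *: T0 p.2 + c1 *: T1 p.2), f p.2).

Lemma lower_step_iter :
  (forall w, T0 (f w) = s0 *: f (T0 w)) -> (forall w, T1 (f w) = s1 *: f (T1 w)) ->
  forall n a b, iter n.+1 lower_step (a, b) =
    (iter n.+1 f a, iter n.+1 f b +
       ((c0 * geom s0 n.+1) *: iter n f (T0 a) + (c1 * geom s1 n.+1) *: iter n f (T1 a))).
Proof.
move=> hT0 hT1; elim=> [|n IH] a b.
  by rewrite /geom !big_ord1 expr0 !mulr1.
rewrite iterS IH /lower_step /= hT0 hT1 (twist_iter_l hf hT0) (twist_iter_l hf hT1).
rewrite !(linD hf) !(linZ hf) !scalerA -!mulrA -!exprS -addrA; congr (_, _ + _).
by rewrite addrACA -!scalerDl (geomSr s0 n.+1) (geomSr s1 n.+1) !mulrDr.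
Qed.

Lemma upper_step_iter :
  (forall w, f (T0 w) = s0 *: T0 (f w)) -> (forall w, f (T1 w) = s1 *: T1 (f w)) ->
  forall n a b, iter n.+1 upper_step (a, b) =
    (iter n.+1 f a +
       ((c0 * geom s0 n.+1) *: T0 (iter n f b) + (c1 * geom s1 n.+1) *: T1 (iter n f b)),
     iter n.+1 f b).
Proof.
move=> hT0 hT1; elim=> [|n IH] a b.
  by rewrite /geom !big_ord1 expr0 !mulr1.
rewrite iterS IH /upper_step /= !(linD hf) !(linZ hf) !hT0 !hT1 !scalerA -!iterS.
rewrite -addrA; congr (_ + _, _).
rewrite addrACA -!scalerDl (geomSl s0 n.+1) (geomSl s1 n.+1).
by congr (_ *: _ + _ *: _); ring.
Qed.
End Triangular.
End LinearMaps.

Section Matrices.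
Variable F : fieldType.

Lemma scalar_mx2 (k : F) : k%:M = mx2 k 0 0 k.
Proof.
by apply/matrixP => i j; rewrite !mxE; case: i => [[|[|i]] Hi] //; case: j => [[|[|j]] Hj].
Qed.

Lemma mulmx_mx2 (a b c d a' b' c' d' : F) :
  mx2 a b c d *m mx2 a' b' c' d' =
  mx2 (a * a' + b * c') (a * b' + b * d') (c * a' + d * c') (c * b' + d * d').
Proof.
apply/matrixP => i j; rewrite !mxE !big_ord_recl big_ord0 !mxE addr0 /=.
by case: i => [[|[|i]] Hi] //; case: j => [[|[|j]] Hj].
Qed.

Lemma tens_mx2 (W : lmodType F) (a b c d : F) (Y : W -> W) (p : W * W) :
  tens (mx2 a b c d) Y p = (a *: Y p.1 + b *: Y p.2, c *: Y p.1 + d *: Y p.2).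
Proof. by rewrite /tens !mxE. Qed.
End Matrices.

Section Module.
Variables (F : fieldType) (q : F) (W : lmodType F) (M : uq_mod q W).
Variables (u v us vs : F).
Local Notation R := (RW M u v).
Local Notation L := (LW M us vs).

Lemma R_lin : is_lin R.
Proof.
move=> k x y; rewrite /RW !(linD (K1_lin M), linZ (K1_lin M), linD (e0p_lin M)).
rewrite !(linZ (e0p_lin M), linD (e1m_lin M), linZ (e1m_lin M)) !scalerDr !scalerA.
by rewrite [u * k]mulrC [v * k]mulrC addrACA.
Qed.

Lemma L_lin : is_lin L.
Proof.
move=> k x y; rewrite /LW !(linD (K0_lin M), linZ (K0_lin M), linD (e1p_lin M)).
rewrite !(linZ (e1p_lin M), linD (e0m_lin M), linZ (e0m_lin M)) !scalerDr !scalerA.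
by rewrite [us * k]mulrC [vs * k]mulrC addrACA.
Qed.

Lemma K0_R w : K0 M (R w) = q ^+ 2 *: R (K0 M w).
Proof.
rewrite /RW (linD (K0_lin M)) !(linZ (K0_lin M)).
rewrite (conj_twist (K0iK0 M) (K0e0p M)) (conj_twist (K0iK0 M) (K0e1m M)) K0K1.
by rewrite scalerDr !scalerA [u * _]mulrC [v * _]mulrC.
Qed.

Lemma K1_R w : K1 M (R w) = q ^- 2 *: R (K1 M w).
Proof.
rewrite /RW (linD (K1_lin M)) !(linZ (K1_lin M)).
rewrite (conj_twist (K1iK1 M) (K1e0p M)) (conj_twist (K1iK1 M) (K1e1m M)).
by rewrite scalerDr !scalerA [u * _]mulrC [v * _]mulrC.
Qed.

Lemma K1_L w : K1 M (L w) = q ^+ 2 *: L (K1 M w).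
Proof.
rewrite /LW (linD (K1_lin M)) !(linZ (K1_lin M)).
rewrite (conj_twist (K1iK1 M) (K1e1p M)) (conj_twist (K1iK1 M) (K1e0m M)) -K0K1.
by rewrite scalerDr !scalerA [us * _]mulrC [vs * _]mulrC.
Qed.

Lemma K0_L w : K0 M (L w) = q ^- 2 *: L (K0 M w).
Proof.
rewrite /LW (linD (K0_lin M)) !(linZ (K0_lin M)).
rewrite (conj_twist (K0iK0 M) (K0e1p M)) (conj_twist (K0iK0 M) (K0e0m M)).
by rewrite scalerDr !scalerA [us * _]mulrC [vs * _]mulrC.
Qed.

Hypothesis hq0 : q != 0.

(* The q-commutations of L in the form needed for its upper triangular action. *)
Lemma L_K1 w : L (K1 M w) = q ^- 2 *: K1 M (L w).
Proof. exact: (twist_flip (expf_neq0 2 hq0) K1_L). Qed.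

Lemma L_K0 w : L (K0 M w) = q ^+ 2 *: K0 M (L w).
Proof. by rewrite (twist_flip _ K0_L) ?invrK // invr_eq0 expf_neq0. Qed.

Variable alpha : F.

Lemma RVW_lower p :
  RVW alpha M u v p = lower_step R (K0 M) (K1 M) (u * (alpha / q)) (v * q) p.
Proof.
case: p => a b; rewrite /RVW /De0p /De1m /DK1 /lower_step scalar_mx2 !tens_mx2 /=.
rewrite /padd /pscale /= !(scale0r, scaler0, addr0, add0r, scale1r).
rewrite !(linZ (e1m_lin M)) !scalerA divfK // divff // scale1r /RW; congr pair.
by rewrite !scalerDr !scalerA addrACA addrC.
Qed.

Lemma LVW_upper p :
  LVW alpha M us vs p = upper_step L (K1 M) (K0 M) us (vs * (q / alpha * q)) p.
Proof.
case: p => a b; rewrite /LVW /De1p /De0m /DK0 /upper_step scalar_mx2 !tens_mx2 /=.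
rewrite /padd /pscale /= !(scale0r, scaler0, addr0, add0r, scale1r).
rewrite !(linZ (e0m_lin M)) !scalerA divfK // divff // scale1r /LW; congr pair.
by rewrite !scalerDr !scalerA addrACA addrC.
Qed.
End Module.

(* Lemma 7.10.  Only q != 0 and q^2 != 1 are used: the identities hold for
   arbitrary u, v, u*, v*, and the entries of the matrices in the statement
   are exactly the coefficients computed by the triangular iteration. *)
Theorem lemma7p10 (F : closedFieldType) (q : F) (hq0 : q != 0) (hq2 : q ^+ 2 != 1)
  (b c bs cs u v us vs : F)
  (hb : b != 0) (hc : c != 0) (hbs : bs != 0) (hcs : cs != 0)
  (huvs : u * vs = - (b * bs * q^-1 * (q - q^-1) ^+ 2))
  (hvus : v * us = - (c * cs * q^-1 * (q - q^-1) ^+ 2))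
  (alpha : F) (halpha : alpha != 0)
  (W : lmodType F) (M : uq_mod q W) (n : nat) (hn : (1 <= n)%N) :
  (forall p : W * W,
     iter n (RVW alpha M u v) p =
     padd (tens 1%:M (iter n (RW M u v)) p)
       (pscale (qint q n)
          (padd (pscale (u * q ^+ (n - 1)) 
                   (tens (e0pV q alpha) (fun w => iter (n - 1) (RW M u v) (K0 M w)) p))
                (pscale (v * q ^- (n - 1))
                   (tens (e1mV F *m K1V q) (fun w => iter (n - 1) (RW M u v) (K1 M w)) p)))))
  /\
  (forall p : W * W,
     iter n (LVW alpha M us vs) p =
     padd (tens 1%:M (iter n (LW M us vs)) p)
       (pscale (qint q n)
          (padd (pscale (us * q ^- (n - 1))
                   (tens (e1pV F) (fun w => K1 M (iter (n - 1) (LW M us vs) w)) p))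
                (pscale (vs * q ^+ (n - 1))
                   (tens (e0mV q alpha *m K0V q) (fun w => K0 M (iter (n - 1) (LW M us vs) w)) p))))).
Proof.
case: n hn => // m _; rewrite subSS subn0; split=> -[x y].
- rewrite (eq_iter (RVW_lower M u v hq0 alpha)).
  rewrite (lower_step_iter _ _ (R_lin M u v) (K0_R M u v) (K1_R M u v)).
  rewrite geom_q2 // geom_qm2 // scalar_mx2 mulmx_mx2 !tens_mx2 /padd /pscale /=.
  rewrite !(mul0r, mulr0, mul1r, addr0, add0r, scale0r, scaler0, scale1r); congr pair.
  by rewrite !scalerDr !scalerA; congr (_ + (_ *: _ + _ *: _)); ring.
- rewrite (eq_iter (LVW_upper M us vs hq0 alpha)).
  rewrite (upper_step_iter _ _ (L_lin M us vs) (L_K1 M us vs hq0) (L_K0 M us vs hq0)).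
  rewrite geom_q2 // geom_qm2 // scalar_mx2 mulmx_mx2 !tens_mx2 /padd /pscale /=.
  rewrite !(mul0r, mulr0, mul1r, addr0, add0r, scale0r, scaler0, scale1r); congr pair.
  by rewrite !scalerDr !scalerA; congr (_ + (_ *: _ + _ *: _)); ring.
Qed.
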